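(* Let $r\in[0,1]^A$ and for $\tau>0$ set $f^\tau(\theta)=\pi_\theta^\top(r-\tau\log\pi_\theta)$, where $\pi_\theta=\mathrm{softmax}(\theta)$, and $f^{*_\tau}:=\max_\theta f^\tau(\theta)$ (attained at $\pi_\theta=\mathrm{softmax}(r/\tau)$). For a fixed $\theta$ and $0<\tau_2<\tau_1$, $$f^{*_{\tau_2}}-f^{\tau_2}(\theta)\le f^{*_{\tau_1}}-f^{\tau_1}(\theta)+\tau_1W\Big(\frac{A-1}{e}\Big)+\tau_1\log A,$$ where $W$ is the principal branch of the Lambert $W$ function ($W(x)e^{W(x)}=x$ for $x\ge0$).
   Context: $\log\pi$ denotes the coordinatewise logarithm. *)

From HB Require Import structures.
From mathcomp Require Import all_boot all_order all_algebra.
From mathcomp Require Import all_classical all_reals all_analysis.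
Set Implicit Arguments. Unset Strict Implicit. Unset Printing Implicit Defensive.
Import Order.TTheory GRing.Theory Num.Theory.
Local Open Scope ring_scope.
Local Open Scope classical_set_scope.

(* pi_theta = softmax(theta), actions indexed by 'I_n (n = |A|). *)
Definition softmax (R : realType) (n : nat) (theta : 'I_n -> R) (a : 'I_n) : R :=
  expR (theta a) / \sum_(b < n) expR (theta b).

Definition ftau (R : realType) (n : nat) (r : 'I_n -> R) (tau : R)
  (theta : 'I_n -> R) : R :=
  \sum_(a < n) softmax theta a * (r a - tau * ln (softmax theta a)).

(* f^{*tau} = max_theta f^tau(theta), taken as the supremum over all theta. *)
Definition fstar (R : realType) (n : nat) (r : 'I_n -> R) (tau : R) : R :=
  sup (range (ftau r tau)).

Definition LambertW (R : realType) (x : R) : R :=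
  xget 0 [set w : R | -1 <= w /\ w * expR w = x].

(* The entropy H(pi) = - sum_a pi a * ln (pi a) of a softmax policy satisfies
   0 <= H(pi) <= ln A, and f^tau(theta) = pi_theta^T r + tau H(pi_theta).
   Hence f^tau, and with it f^{*tau}, is nondecreasing in tau, while
   f^{tau1}(theta) - f^{tau2}(theta) = (tau1 - tau2) H(pi_theta) <= tau1 ln A.
   These two facts give the inequality even without the Lambert W term, which
   is nonnegative because W(x) >= 0 for x >= 0. *)

From HB Require Import structures.
From mathcomp Require Import all_boot all_order all_algebra.
From mathcomp Require Import all_classical all_reals all_analysis.
From mathcomp Require Import lra.
Import Order.TTheory GRing.Theory Num.Theory.
Local Open Scope ring_scope.

Set Implicit Arguments. Unset Strict Implicit.

Lemma ln_le_subr1 (R : realType) (y : R) : 0 < y -> ln y <= y - 1.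
Proof.
move=> y_gt0; have := @le_ln1Dx R (y - 1).
by rewrite addrCA subrr addr0; apply; lra.
Qed.

Lemma LambertW_ge0 (R : realType) (x : R) : 0 <= x -> 0 <= LambertW x.
Proof.
move=> x_ge0; rewrite /LambertW; case: xgetP => [w _ [_ wexpw] | _ //].
rewrite leNgt; apply/negP => w_lt0.
have : w * expR w < 0 by rewrite pmulr_llt0 ?expR_gt0.
by rewrite wexpw ltNge x_ge0.
Qed.

Section Softmax.
Variables (R : realType) (n : nat).
Hypothesis n_gt0 : (0 < n)%N.
Implicit Types (theta r : 'I_n -> R) (tau : R).

Let a0 : 'I_n := Ordinal n_gt0.

Lemma sum_expR_gt0 theta : 0 < \sum_(b < n) expR (theta b).
Proof.
rewrite (bigD1 a0) //= ltr_pwDl ?expR_gt0 //.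
by apply: sumr_ge0 => b _; exact/ltW/expR_gt0.
Qed.

Lemma softmax_gt0 theta a : 0 < softmax theta a.
Proof. by rewrite divr_gt0 ?expR_gt0 ?sum_expR_gt0. Qed.

Lemma sum_softmax theta : \sum_(a < n) softmax theta a = 1.
Proof. by rewrite -mulr_suml divff // gt_eqF ?sum_expR_gt0. Qed.

Lemma softmax_le1 theta a : softmax theta a <= 1.
Proof.
rewrite -(sum_softmax theta) (bigD1 a) //= lerDl.
by apply: sumr_ge0 => b _; exact/ltW/softmax_gt0.
Qed.

Definition entropy theta : R :=
  - \sum_(a < n) softmax theta a * ln (softmax theta a).

Lemma ftau_entropyE r tau theta :
  ftau r tau theta = \sum_(a < n) softmax theta a * r a + tau * entropy theta.
Proof.
rewrite /ftau /entropy mulrN mulr_sumr -sumrN -big_split /=.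
by apply: eq_bigr => a _; rewrite mulrBr mulrCA.
Qed.

Lemma entropy_ge0 theta : 0 <= entropy theta.
Proof.
rewrite oppr_ge0; apply: sumr_le0 => a _.
exact: mulr_ge0_le0 (ltW (softmax_gt0 _ _)) (ln_le0 (softmax_le1 _ _)).
Qed.

(* Gibbs' inequality against the uniform distribution: each term satisfies
   p ln (1 / (n p)) <= p (1 / (n p) - 1) = 1/n - p. *)
Lemma entropy_le_ln theta : entropy theta <= ln n%:R.
Proof.
have n_pos : 0 < n%:R :> R by rewrite ltr0n.
have termwise a : - (softmax theta a * ln (softmax theta a)) <=
    softmax theta a * ln n%:R + (n%:R^-1 - softmax theta a).
  set p := softmax theta a; have p_gt0 : 0 < p := softmax_gt0 theta a.
  have np_gt0 : 0 < n%:R * p by rewrite mulr_gt0.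
  have inp_gt0 : 0 < (n%:R * p)^-1 by rewrite invr_gt0.
  have := ler_wpM2l (ltW p_gt0) (ln_le_subr1 inp_gt0).
  rewrite lnV ?posrE //= lnM ?posrE // mulrBr mulr1 invfM mulrCA divff ?gt_eqF //.
  by rewrite mulr1; lra.
rewrite /entropy -sumrN; apply: le_trans (ler_sum _ (fun a _ => termwise a)) _.
rewrite !big_split /= -mulr_suml sumrN sum_softmax sumr_const card_ord.
by rewrite -(mulr_natr n%:R^-1) mulVf ?gt_eqF // mul1r; lra.
Qed.

Lemma ftau_le_tau r theta tau2 tau1 :
  tau2 <= tau1 -> ftau r tau2 theta <= ftau r tau1 theta.
Proof. by move=> le21; rewrite !ftau_entropyE lerD2l ler_wpM2r ?entropy_ge0. Qed.

Lemma ftau_ubound r (M : R) tau theta : (forall a, r a <= M) -> 0 <= tau ->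
  ftau r tau theta <= M + tau * ln n%:R.
Proof.
move=> r_le tau_ge0; rewrite ftau_entropyE lerD ?ler_wpM2l ?entropy_le_ln //.
rewrite -[M]mul1r -(sum_softmax theta) mulr_suml; apply: ler_sum => a _.
by rewrite ler_wpM2l ?r_le // ltW ?softmax_gt0.
Qed.

Lemma fstar_le_tau r (M : R) tau2 tau1 : (forall a, r a <= M) ->
  0 <= tau1 -> tau2 <= tau1 -> fstar r tau2 <= fstar r tau1.
Proof.
move=> r_le tau1_ge0 le21.
have ub1 : has_ubound (range (ftau r tau1)).
  by exists (M + tau1 * ln n%:R) => _ [theta _ <-]; exact: ftau_ubound.
apply: ge_sup; first by exists (ftau r tau2 (fun=> 0)), (fun=> 0).
move=> _ [theta _ <-]; apply: le_trans (ftau_le_tau r theta le21) _.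
by apply: ub_le_sup => //; exists theta.
Qed.

Lemma ftau_subr_le r theta tau2 tau1 : 0 <= tau2 -> tau2 <= tau1 ->
  ftau r tau1 theta - ftau r tau2 theta <= tau1 * ln n%:R.
Proof.
move=> tau2_ge0 le21; rewrite !ftau_entropyE.
have := entropy_ge0 theta; have := entropy_le_ln theta.
have : 0 <= ln n%:R :> R by rewrite ln_ge0 // ler1n.
nra.
Qed.

End Softmax.

Theorem lemma16 (R : realType) (n : nat) (hn : (0 < n)%N)
  (r : 'I_n -> R) (hr : forall a, 0 <= r a <= 1)
  (theta : 'I_n -> R) (tau1 tau2 : R) (h2 : 0 < tau2) (h12 : tau2 < tau1) :
  fstar r tau2 - ftau r tau2 theta <=
    fstar r tau1 - ftau r tau1 theta
    + tau1 * LambertW ((n%:R - 1) / expR 1) + tau1 * ln (n%:R).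
Proof.
have r_le1 a : r a <= 1 by case/andP: (hr a).
have tau1_gt0 : 0 < tau1 := lt_trans h2 h12.
have fstar_le := fstar_le_tau hn r_le1 (ltW tau1_gt0) (ltW h12).
have ftau_diff := ftau_subr_le hn r theta (ltW h2) (ltW h12).
have W_ge0 : 0 <= tau1 * LambertW ((n%:R - 1) / expR 1 : R).
  apply/mulr_ge0/LambertW_ge0; first exact: ltW.
  by rewrite divr_ge0 ?subr_ge0 ?ler1n // ltW // expR_gt0.
lra.
Qed.
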